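(* Let $\Delta_3=x_1x_2x_1\in\mathcal{B}_3$. For every integer $k\ge0$, $$V_3(\Delta_3^{2k})=2s^{12k}+s^{6k+2}+s^{6k-2},\qquad V_3(\Delta_3^{2k+1})=-s^{6k+5}-s^{6k+1}.$$
   Context: $\mathcal{B}_3$ is the braid group on three strands with standard Artin generators $x_1,x_2$; $V_3(\beta)$ is the Jones polynomial of the closure $\widehat\beta$, normalized by $V(\text{unknot})=1$ and $q^{-1}V_{L_+}-qV_{L_-}=(q^{1/2}-q^{-1/2})V_{L_0}$, written in the variable $s=q^{-1/2}$. Conventions: closures of $\alpha x_i^{e+2}\gamma$, $\alpha x_i^{e+1}\gamma$, $\alpha x_i^{e}\gamma$ play the roles of $L_-,L_0,L_+$ (e.g. the closure of $x_1^2\in\mathcal B_2$ has Jones polynomial $-s-s^5$). *)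

From HB Require Import structures.
From mathcomp Require Import all_boot all_order all_algebra.
Set Implicit Arguments. Unset Strict Implicit. Unset Printing Implicit Defensive.
Import Order.TTheory GRing.Theory Num.Theory.
Local Open Scope ring_scope.

(* A braid word on n strands: a list of letters (i, b); (i, true) stands for
   the Artin generator x_(i+1) and (i, false) for its inverse x_(i+1)^-1
   (0 <= i, i + 2 <= n).  Following the paper's conventions (closures of
   alpha x_i^(e+2) gamma, alpha x_i^(e+1) gamma, alpha x_i^e gamma play the
   roles of L_-, L_0, L_+), a letter x_i is a NEGATIVE crossing. *)
Definition braid_word := seq (nat * bool).

Definition valid_word (n : nat) (w : braid_word) : bool :=
  all (fun l => (l.1.+2 <= n)%N) w.

(* Vertices of the closed-braid state graph: strand p at level j
   (levels taken mod m = size w, which realizes the closure). *)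
Definition vid (n m j p : nat) : nat :=
  if m is 0 then p else ((j %% m) * n + p)%N.

(* Edges contributed by letter number j = (i, _) when smoothed:
   h = false : "vertical" (oriented) smoothing,
   h = true  : "horizontal" smoothing (cap + cup). *)
Definition letter_edges (n m j : nat) (l : nat * bool) (h : bool)
  : seq (nat * nat) :=
  let i := l.1 in
  [seq (vid n m j p, vid n m j.+1 p)
     | p <- iota 0 n & ~~ (h && ((p == i) || (p == i.+1)))]
  ++ (if h then [:: (vid n m j i, vid n m j i.+1);
                    (vid n m j.+1 i, vid n m j.+1 i.+1)] else [::]).

Definition state_edges (n : nat) (w : braid_word) (st : seq bool)
  : seq (nat * nat) :=
  flatten [seq letter_edges n (size w) j (nth (0%N, true) w j) (nth false st j)
          | j <- iota 0 (size w)].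

Definition merge (lab : nat -> nat) (e : nat * nat) : nat -> nat :=
  let lu := lab e.1 in let lv := lab e.2 in
  fun x => if lab x == lv then lu else lab x.

Definition nloops (n : nat) (w : braid_word) (st : seq bool) : nat :=
  let N := if size w is 0 then n else (size w * n)%N in
  let lab := foldl merge id (state_edges n w st) in
  size (undup [seq lab x | x <- iota 0 N]).

(* Exponent of A contributed by a state: for a letter x_i (negative
   crossing) the horizontal smoothing is the A-smoothing, for x_i^-1 the
   vertical one is. *)
Definition state_Aexp (w : braid_word) (st : seq bool) : int :=
  \sum_(j < size w)
     (if (nth false st j) == (nth (0%N, true) w j).2 then 1 else -1).

Definition writhe (w : braid_word) : int :=
  \sum_(l <- w) (if l.2 then -1 else 1).

(* Normalized Kauffman bracket (unknot = 1), evaluated at A = a. *)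
Definition kbracket (R : fieldType) (n : nat) (w : braid_word) (a : R) : R :=
  \sum_(st : (size w).-tuple bool)
     a ^ state_Aexp w st * (- a ^+ 2 - a ^- 2) ^+ (nloops n w st).-1.

(* Jones polynomial of the closure of the braid word w on n strands,
   V = (-A^3)^(-writhe) <D>, evaluated at A = a, where A = t^(-1/4)
   i.e. s = q^(-1/2) = A^2. *)
Definition jones (R : fieldType) (n : nat) (w : braid_word) (a : R) : R :=
  (- a ^+ 3) ^ (- writhe w) * kbracket n w a.

Definition Delta3 : braid_word := [:: (0%N, true); (1%N, true); (0%N, true)].
Definition Delta3_pow (m : nat) : braid_word := flatten (nseq m Delta3).

(* The Kauffman bracket of a closed 3-braid can be computed letter by letter:
   a partial smoothing only matters through the way it connects the three top
   points of the braid to the three current bottom points -- one of the five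
   crossingless matchings 1, e_1, e_2, e_1 e_2, e_2 e_1 spanning the
   Temperley-Lieb algebra TL_3 -- and through the number of loops it has
   already closed.  Smoothing the three crossings of Delta = x_1 x_2 x_1 thus
   gives a linear recurrence for the brackets of the closures of e Delta^m,
   e in that basis, whose solution is periodic of period two up to a factor
   a^6.  Together with the writhe -3m of Delta^m this yields the formulas. *)

From Pilot Require Import Defs.
From mathcomp Require Import all_boot all_order all_algebra.
From mathcomp Require Import zify ring.
Set Implicit Arguments. Unset Strict Implicit. Unset Printing Implicit Defensive.
Import GRing.Theory.

(** * Classes of a labelling under merging *)

Lemma eq_merge (f : nat -> nat) (e : nat * nat) x y :
  (Defs.merge f e x == Defs.merge f e y) =
  (f x == f y) || ((f x == f e.1) || (f x == f e.2)) && ((f y == f e.1) || (f y == f e.2)).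
Proof.
rewrite /Defs.merge /=; move: (f x) (f y) (f e.1) (f e.2) => A B U V.
case: (A =P V) => [->|hA]; case: (B =P V) => [->|hB]; rewrite ?eqxx ?orbT ?andbT ?orbF //=.
- by rewrite (eq_sym V) (negbTE (introN eqP hB)) eq_sym.
- by rewrite (negbTE (introN eqP hA)).
- by case: (A =P U) => [->|] /=; [rewrite eq_sym orbb | rewrite orbF].
Qed.

Definition glue (f : nat -> nat) (E : seq (nat * nat)) := foldl Defs.merge f E.

Definition map_edges (phi : nat -> nat) (E : seq (nat * nat)) :=
  [seq (phi e.1, phi e.2) | e <- E].

Definition edges_within (D : seq nat) (E : seq (nat * nat)) :=
  all (fun e => (e.1 \in D) && (e.2 \in D)) E.

Lemma map_edges_within phi D E :
  edges_within D E -> edges_within (map phi D) (map_edges phi E).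
Proof.
by elim: E => //= e E IH /andP [/andP [h1 h2] HE]; rewrite !map_f // IH.
Qed.

Lemma map_edges_id E : map_edges id E = E.
Proof. by elim: E => //= [[x y] E] ->. Qed.

Lemma glue_map (phi : nat -> nat) D E f g :
  edges_within D E ->
  {in D &, forall x y, (g x == g y) = (f (phi x) == f (phi y))} ->
  {in D &, forall x y, (glue g E x == glue g E y) =
                       (glue f (map_edges phi E) (phi x) == glue f (map_edges phi E) (phi y))}.
Proof.
elim: E f g => [|e E IH] f g //= /andP[/andP[D1 D2] HE] H.
by apply: IH => // x y Dx Dy; rewrite !eq_merge /= !H.
Qed.

Lemma glue_fresh x E f :
  all (fun e => (e.1 != x) && (e.2 != x)) E ->
  (forall y, (f x == f y) = (x == y)) ->
  forall y, (glue f E x == glue f E y) = (x == y).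
Proof.
elim: E f => [|e E IH] f //= /andP[/andP[D1 D2] HE] H.
apply: IH => // y.
rewrite eq_merge H (H e.1) (H e.2) (eq_sym x e.1) (eq_sym x e.2) (negbTE D1) (negbTE D2).
by rewrite /= ?andbF ?orbF.
Qed.

Definition nclasses (f : nat -> nat) (s : seq nat) := size (undup (map f s)).

Lemma mem_map_has (f : nat -> nat) x s : (f x \in map f s) = has (fun y => f x == f y) s.
Proof. by elim: s => //= y s IH; rewrite in_cons IH. Qed.

Lemma eq_in_nclasses (f g : nat -> nat) (s : seq nat) :
  {in s &, forall x y, (f x == f y) = (g x == g y)} -> nclasses f s = nclasses g s.
Proof.
elim: s => //= x s IH H; rewrite /nclasses /= !mem_map_has.
have -> : has (fun y => f x == f y) s = has (fun y => g x == g y) s.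
  by apply: eq_in_has => y ys; apply: H; rewrite in_cons ?eqxx ?ys ?orbT.
have E := IH (fun a b ha hb => H a b (mem_behead (s:=x::s) ha) (mem_behead (s:=x::s) hb)).
by case: has => //=; rewrite -/(nclasses _ _) E.
Qed.

Lemma nclasses_map f phi s : nclasses f (map phi s) = nclasses (f \o phi) s.
Proof. by rewrite /nclasses -map_comp. Qed.

Lemma size_undup_cat_disjoint (s t : seq nat) : ~~ has (mem t) s ->
  size (undup (s ++ t)) = size (undup s) + size (undup t).
Proof.
move=> H; rewrite undup_cat size_cat; congr (_ + _).
rewrite (eq_in_filter (a2 := predT)) ?filter_predT // => z; rewrite mem_undup => zs /=.
by apply/negP => zt; move/hasP: H; apply; exists z.
Qed.

Lemma nclasses_split F (W L : seq nat) : {subset W <= L} ->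
  nclasses F L = nclasses F W + nclasses F [seq x <- L | F x \notin map F W].
Proof.
move=> sub; rewrite /nclasses -size_undup_cat_disjoint.
  apply/perm_size/perm_undup => z; rewrite mem_cat; apply/mapP/orP.
  - case=> x xL ->; case: (boolP (F x \in map F W)) => h; [by left|right].
    by apply/mapP; exists x => //; rewrite mem_filter h.
  - case=> [/mapP [x xW ->]|/mapP [x]]; first by exists x => //; apply: sub.
    by rewrite mem_filter => /andP[_ xL] ->; exists x.
apply/hasP => [[z /mapP [x xW ->]]] /= /mapP [y].
by rewrite mem_filter => /andP [h _] Exy; move: h; rewrite -Exy map_f.
Qed.

Lemma leq_nclasses f (W L : seq nat) : {subset W <= L} -> nclasses f W <= nclasses f L.
Proof. by move=> H; rewrite (nclasses_split f H) leq_addr. Qed.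

Lemma nclasses_merge F e (W L : seq nat) : {subset W <= L} -> e.1 \in W -> e.2 \in W ->
  nclasses (Defs.merge F e) L + nclasses F W = nclasses F L + nclasses (Defs.merge F e) W.
Proof.
move=> sub h1 h2; rewrite (nclasses_split (Defs.merge F e) sub) (nclasses_split F sub).
have memW x : (Defs.merge F e x \in map (Defs.merge F e) W) = (F x \in map F W).
  rewrite !mem_map_has; apply/hasP/hasP => [[w wW]|[w wW Hw]].
    rewrite eq_merge => /orP [Hw|/andP [/orP [H|H] _]]; first by exists w.
      by exists e.1.
    by exists e.2.
  by exists w => //; rewrite eq_merge Hw.
rewrite (eq_filter (a2 := fun x => F x \notin map F W)); last by move=> x; rewrite memW.
have -> : nclasses (Defs.merge F e) [seq x <- L | F x \notin map F W] =
          nclasses F [seq x <- L | F x \notin map F W].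
  rewrite /nclasses; congr (size (undup _)); apply/eq_in_map => x.
  rewrite mem_filter => /andP [H _]; rewrite /Defs.merge.
  by case: eqP => // E; move: H; rewrite E map_f.
lia.
Qed.

Lemma nclasses_glue F E (W L : seq nat) : {subset W <= L} -> edges_within W E ->
  nclasses (glue F E) L + nclasses F W = nclasses F L + nclasses (glue F E) W.
Proof.
move=> sub; elim: E F => [|e E IH] F //= /andP [/andP [h1 h2] HE].
have := IH (Defs.merge F e) HE; have := nclasses_merge F sub h1 h2.
rewrite /glue /=; lia.
Qed.

(** * Counting the loops of a closed 3-braid row by row *)

Definition crossing_edges (lo hi i : nat) (h : bool) : seq (nat * nat) :=
  [seq (lo + p, hi + p) | p <- iota 0 3 & ~~ (h && ((p == i) || (p == i.+1)))]
  ++ (if h then [:: (lo + i, lo + i.+1); (hi + i, hi + i.+1)] else [::]).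

Lemma letter_edgesE M j l h :
  letter_edges 3 M.+1 j l h = crossing_edges (vid 3 M.+1 j 0) (vid 3 M.+1 j.+1 0) l.1 h.
Proof.
have vidE j' p : vid 3 M.+1 j' p = vid 3 M.+1 j' 0 + p by rewrite /vid addn0.
rewrite /letter_edges /crossing_edges; congr (_ ++ _).
  by apply: eq_map => p; rewrite (vidE j p) (vidE j.+1 p).
by case: h; rewrite // (vidE j l.1) (vidE j.+1 l.1) (vidE j l.1.+1) (vidE j.+1 l.1.+1).
Qed.

Lemma map_crossing_edges phi lo hi lo' hi' i h : i < 2 ->
  (forall p, p < 3 -> phi (lo + p) = lo' + p) ->
  (forall p, p < 3 -> phi (hi + p) = hi' + p) ->
  map_edges phi (crossing_edges lo hi i h) = crossing_edges lo' hi' i h.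
Proof.
move=> i2 Hlo Hhi; rewrite /map_edges /crossing_edges map_cat -map_comp; congr (_ ++ _).
  apply/eq_in_map => p; rewrite mem_filter mem_iota => /andP [_ hp] /=.
  by rewrite Hlo ?Hhi.
have i0 : i < 3 by lia.
have i1 : i.+1 < 3 by lia.
by case: h => //=; rewrite (Hlo _ i0) (Hlo _ i1) (Hhi _ i0) (Hhi _ i1).
Qed.

Lemma crossing_edges_within9 i h : i < 2 -> edges_within (iota 0 9) (crossing_edges 3 6 i h).
Proof. by case: i => [|[|]] //; case: h. Qed.

Lemma crossing_edges_within6 i h : i < 2 -> edges_within (iota 0 6) (crossing_edges 3 0 i h).
Proof. by case: i => [|[|]] //; case: h. Qed.

(* A state labels the six points [0..2] (top of the braid) and [3..5] (current
   bottom row).  One more letter adds the row [6..8]; its points get fresh (odd)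
   labels. *)
Definition stack (g : nat -> nat) : nat -> nat :=
  fun x => if x < 6 then (g x).*2 else (x.*2).+1.

Definition step_label (g : nat -> nat) i b : nat -> nat :=
  fun x => glue (stack g) (crossing_edges 3 6 i b) (if x < 3 then x else x + 3).

Definition step_loops (g : nat -> nat) i b : nat :=
  nclasses (glue (stack g) (crossing_edges 3 6 i b)) (iota 0 9)
  - nclasses (glue (stack g) (crossing_edges 3 6 i b)) [:: 0; 1; 2; 6; 7; 8].

(* The last letter ends on the top row, which closes the braid. *)
Definition close_loops (g : nat -> nat) i b : nat :=
  nclasses (glue g (crossing_edges 3 0 i b)) (iota 0 6).

Fixpoint run_loops (g : nat -> nat) (ls : seq nat) (bs : seq bool) : nat :=
  match ls, bs with
  | i :: ls', b :: bs' =>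
      if ls' is [::] then close_loops g i b
      else step_loops g i b + run_loops (step_label g i b) ls' bs'
  | _, _ => 0
  end.

Lemma run_loops_cons g i ls b bs : ls != [::] ->
  run_loops g (i :: ls) (b :: bs) = step_loops g i b + run_loops (step_label g i b) ls bs.
Proof. by case: ls. Qed.

Lemma run_loops_gt0 g ls bs : size bs = size ls -> ls != [::] -> 0 < run_loops g ls bs.
Proof.
elim: ls g bs => // i ls IH g [|b bs] //= [hs] _.
case: ls IH hs => [|j ls] IH hs; last by rewrite ltn_addl // IH.
by rewrite /close_loops /nclasses lt0n size_eq0; apply/eqP => /undup_nil.
Qed.

Lemma double_neq_odd m n : (m.*2 == n.*2.+1) = false.
Proof. by apply/eqP => /(congr1 odd); rewrite /= !odd_double. Qed.

Lemma eqn_double m n : (m.*2 == n.*2) = (m == n).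
Proof. exact: (inj_eq double_inj). Qed.

Lemma nclasses_stack g : nclasses (stack g) (iota 0 9) = nclasses g (iota 0 6) + 3.
Proof.
rewrite /nclasses (_ : iota 0 9 = iota 0 6 ++ [:: 6; 7; 8]) // map_cat.
rewrite size_undup_cat_disjoint.
  congr (_ + _); rewrite -!/(nclasses _ _); apply: eq_in_nclasses => x y.
  by rewrite !mem_iota /stack /= => -> ->; exact: eqn_double.
apply/hasP => [[z /mapP [x hx ->] /mapP [y hy]]] /eqP.
have x6 : x < 6 by move: hx; rewrite mem_iota.
have y6 : 6 <= y by move: hy; rewrite !inE => /or3P [] /eqP ->.
by rewrite /stack x6 ltnNge y6 /= double_neq_odd.
Qed.

Lemma eq_stack g g' : {in iota 0 6 &, forall x y, (g x == g y) = (g' x == g' y)} ->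
  {in iota 0 9 &, forall x y, (stack g x == stack g y) = (stack g' x == stack g' y)}.
Proof.
move=> H x y; rewrite !mem_iota /stack /= => hx hy.
case: (ltnP x 6) => x6; case: (ltnP y 6) => y6 //.
- by rewrite !eqn_double H // mem_iota.
- by rewrite !double_neq_odd.
- by rewrite eq_sym double_neq_odd eq_sym double_neq_odd.
Qed.

Lemma eq_run_loops g g' ls bs : all (fun i => i < 2) ls ->
  {in iota 0 6 &, forall x y, (g x == g y) = (g' x == g' y)} ->
  run_loops g ls bs = run_loops g' ls bs.
Proof.
elim: ls g g' bs => // i ls IH g g' [|b bs] //= /andP [i2 hls] H.
case: ls IH hls => [|j ls] IH hls.
  rewrite /close_loops; apply: eq_in_nclasses => x y hx hy.
  by rewrite (@glue_map id (iota 0 6) _ g' g) ?map_edges_id // crossing_edges_within6.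
set h := glue (stack g) (crossing_edges 3 6 i b).
set h' := glue (stack g') (crossing_edges 3 6 i b).
have Hs : {in iota 0 9 &, forall x y, (h x == h y) = (h' x == h' y)}.
  move=> x y hx hy; rewrite (@glue_map id (iota 0 9) _ (stack g') (stack g)) ?map_edges_id //.
    exact: crossing_edges_within9.
  by move=> u v hu hv; rewrite (eq_stack H).
have sub9 : {subset [:: 0; 1; 2; 6; 7; 8] <= iota 0 9} by apply/allP.
congr (_ + _).
  rewrite /step_loops -/h -/h' (eq_in_nclasses (g := h') (s := iota 0 9)) //.
  rewrite (eq_in_nclasses (g := h') (s := [:: 0; 1; 2; 6; 7; 8])) //.
  by move=> x y hx hy; apply: Hs; apply: sub9.
apply: IH => // x y; rewrite !mem_iota /= => hx hy.
by rewrite /step_label -/h -/h'; apply: Hs; rewrite mem_iota; case: ifP; lia.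
Qed.

Lemma all_in2_eq (P Q : nat -> nat -> bool) s :
  all (fun x => all (fun y => P x y == Q x y) s) s -> {in s &, forall x y, P x y = Q x y}.
Proof. by move=> /allP H x y xs ys; move: (H x xs) => /allP /(_ y ys) /eqP. Qed.

Section ClosedBraidLoops.
Variables (w : braid_word) (st : seq bool).
Hypothesis w_letters : all (fun l => l.1 < 2) w.
Hypothesis size_st : size st = size w.

Let letter t := nth (0, true) w t.
Let smoothing t := nth false st t.

Definition edges_at j := letter_edges 3 (size w) j (letter j) (smoothing j).

Definition glued t := glue id (flatten [seq edges_at j | j <- iota 0 t]).

Lemma gluedS t : glued t.+1 = glue (glued t) (edges_at t).
Proof. by rewrite /glued -addn1 iotaD map_cat flatten_cat /glue foldl_cat /= cats0. Qed.

(* Position of the six state points in the diagram after [t] letters (rows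
   [0] and [t]), and of the nine points of [stack] (rows [0], [t] and [t+1]). *)
Definition state_vertex t x := if x < 3 then x else 3 * t + (x - 3).
Definition stack_vertex t x := if x < 6 then state_vertex t x else 3 * t + 3 + (x - 6).

Ltac solve_vertex := rewrite ?/stack_vertex ?/state_vertex /=; repeat case: ifP => ?; lia.

(* [g] describes the connectivity of the six state points after [t] letters,
   [c] loops are already closed, and the rows below [t] are still untouched. *)
Definition tracks t (g : nat -> nat) c :=
  [/\ {in iota 0 6 &, forall x y,
         (g x == g y) = (glued t (state_vertex t x) == glued t (state_vertex t y))},
      nclasses (glued t) (iota 0 (3 * t + 3)) = c + nclasses g (iota 0 6) &
      forall x, 3 * t + 3 <= x -> forall y, (glued t x == glued t y) = (x == y)].

Lemma letter_lt2 t : t < size w -> (letter t).1 < 2.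
Proof. by move=> ht; exact: (allP w_letters) _ (mem_nth _ ht). Qed.

Lemma edges_at_last t : t.+1 = size w ->
  edges_at t = map_edges (state_vertex t) (crossing_edges 3 0 (letter t).1 (smoothing t)).
Proof.
move=> ht; have i2 : (letter t).1 < 2 by apply: letter_lt2; lia.
rewrite /edges_at -ht letter_edgesE /vid modnn modn_small ?mul0n; last by lia.
rewrite !addn0 mulnC; symmetry; apply: map_crossing_edges => // p hp.
  by rewrite /state_vertex ltnNge leq_addr /=; lia.
by rewrite /state_vertex add0n hp.
Qed.

Lemma edges_at_stack t : t.+1 < size w ->
  edges_at t = map_edges (stack_vertex t) (crossing_edges 3 6 (letter t).1 (smoothing t)).
Proof.
move=> ht; have i2 : (letter t).1 < 2 by apply: letter_lt2; lia.
have [M eM] : exists M, size w = M.+1 by exists (size w).-1; lia.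
rewrite /edges_at eM letter_edgesE /vid !modn_small; try lia.
rewrite !addn0 (_ : t.+1 * 3 = 3 * t + 3); last by lia.
by rewrite mulnC; symmetry; apply: map_crossing_edges => // p hp; solve_vertex.
Qed.

Lemma nloops_last t g c : t.+1 = size w -> tracks t g c ->
  nclasses (glued (size w)) (iota 0 (size w * 3))
  = c + close_loops g (letter t).1 (smoothing t).
Proof.
move=> ht [Hker Hcnt _]; have i2 : (letter t).1 < 2 by apply: letter_lt2; lia.
rewrite -ht gluedS; set W := map (state_vertex t) (iota 0 6).
have sub : {subset W <= iota 0 (t.+1 * 3)}.
  by move=> x /mapP [y]; rewrite !mem_iota /state_vertex => hy ->; case: ifP; lia.
have HE : edges_within W (edges_at t).
  by rewrite edges_at_last //; apply: map_edges_within; apply: crossing_edges_within6.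
have := nclasses_glue (glued t) sub HE.
have -> : nclasses (glued t) W = nclasses g (iota 0 6).
  by rewrite /W nclasses_map; apply: eq_in_nclasses => x y hx hy /=; rewrite Hker.
have -> : nclasses (glue (glued t) (edges_at t)) W = close_loops g (letter t).1 (smoothing t).
  rewrite /W nclasses_map /close_loops; apply: eq_in_nclasses => x y hx hy /=.
  rewrite edges_at_last // (@glue_map (state_vertex t) (iota 0 6) _ (glued t) g) //.
  exact: crossing_edges_within6.
by rewrite (_ : t.+1 * 3 = 3 * t + 3) ?Hcnt; lia.
Qed.

Lemma nclasses_glued_fresh_row t :
  (forall x, 3 * t + 3 <= x -> forall y, (glued t x == glued t y) = (x == y)) ->
  nclasses (glued t) (iota 0 (3 * t.+1 + 3)) = nclasses (glued t) (iota 0 (3 * t + 3)) + 3.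
Proof.
move=> Hfresh; rewrite (_ : 3 * t.+1 + 3 = (3 * t + 3) + 3); last by lia.
rewrite iotaD add0n /nclasses map_cat size_undup_cat_disjoint.
  congr (_ + _); rewrite -/(nclasses _ _) (@eq_in_nclasses _ id).
    by rewrite /nclasses map_id undup_id ?iota_uniq // size_iota.
  by move=> x y; rewrite !mem_iota => hx hy; rewrite Hfresh //; lia.
apply/hasP => [[z]] /mapP [x]; rewrite mem_iota => hx -> /mapP [y].
by rewrite mem_iota => hy /eqP; rewrite eq_sym Hfresh => [/eqP|]; lia.
Qed.

Lemma tracks_stack t g c : tracks t g c ->
  {in iota 0 9 &, forall x y,
    (stack g x == stack g y) = (glued t (stack_vertex t x) == glued t (stack_vertex t y))}.
Proof.
move=> [Hker _ Hfresh] x y; rewrite !mem_iota /= /stack /stack_vertex => hx hy.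
case: (ltnP x 6) => x6; case: (ltnP y 6) => y6.
- by rewrite eqn_double Hker // mem_iota.
- by rewrite double_neq_odd eq_sym Hfresh; [apply/esym/eqP; solve_vertex | lia].
- by rewrite eq_sym double_neq_odd Hfresh; [apply/esym/eqP; solve_vertex | lia].
- by rewrite Hfresh; [apply/eqP/eqP; lia | lia].
Qed.

Lemma tracks_step t g c : t.+1 < size w -> tracks t g c ->
  tracks t.+1 (step_label g (letter t).1 (smoothing t))
              (c + step_loops g (letter t).1 (smoothing t)).
Proof.
move=> ht Ht; have ker_stack := tracks_stack Ht; case: Ht => _ Hcnt Hfresh.
have EB := edges_at_stack ht; set i := (letter t).1 in EB *; set b := smoothing t in EB *.
have i2 : i < 2 by apply: letter_lt2; lia.
set h := glue (stack g) (crossing_edges 3 6 i b).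
have ker_h : {in iota 0 9 &, forall x y,
    (h x == h y) = (glued t.+1 (stack_vertex t x) == glued t.+1 (stack_vertex t y))}.
  move=> x y hx hy; rewrite gluedS EB.
  by apply: (@glue_map _ (iota 0 9)) => //; exact: crossing_edges_within9.
split.
- move=> x y; rewrite !mem_iota /= => hx hy.
  have Ev z : z < 6 -> state_vertex t.+1 z = stack_vertex t (if z < 3 then z else z + 3).
    by move=> hz; solve_vertex.
  by rewrite /step_label -/h (Ev x) // (Ev y) //; apply: ker_h; rewrite mem_iota; case: ifP; lia.
- set W := map (stack_vertex t) (iota 0 9).
  have sub : {subset W <= iota 0 (3 * t.+1 + 3)}.
    by move=> x /mapP [y]; rewrite !mem_iota => hy ->; solve_vertex.
  have HE : edges_within W (edges_at t).
    by rewrite EB; apply: map_edges_within; apply: crossing_edges_within9.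
  have := nclasses_glue (glued t) sub HE; rewrite -gluedS nclasses_glued_fresh_row //.
  have -> : nclasses (glued t) W = nclasses g (iota 0 6) + 3.
    rewrite /W nclasses_map -nclasses_stack.
    by apply: eq_in_nclasses => x y hx hy /=; rewrite ker_stack.
  have -> : nclasses (glued t.+1) W = nclasses h (iota 0 9).
    by rewrite /W nclasses_map; apply: eq_in_nclasses => x y hx hy /=; rewrite ker_h.
  have -> : nclasses (step_label g i b) (iota 0 6) = nclasses h [:: 0; 1; 2; 6; 7; 8] by [].
  have : nclasses h [:: 0; 1; 2; 6; 7; 8] <= nclasses h (iota 0 9).
    by apply: leq_nclasses; apply/allP.
  by rewrite /step_loops -/h Hcnt; lia.
- move=> x hx y; rewrite gluedS EB; apply: glue_fresh; last by move=> z; apply: Hfresh; lia.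
  apply/allP => e he.
  have := allP (map_edges_within (stack_vertex t) (crossing_edges_within9 b i2)) e he.
  move=> /andP [/mapP [p1 hp1 ->] /mapP [p2 hp2 ->]].
  by move: hp1 hp2; rewrite !mem_iota => hp1 hp2; apply/andP; split; apply/eqP; solve_vertex.
Qed.

Lemma nloops_tracked r t g c : t + r.+1 = size w -> tracks t g c ->
  nclasses (glued (size w)) (iota 0 (size w * 3))
  = c + run_loops g (drop t (map fst w)) (drop t st).
Proof.
elim: r t g c => [|r IH] t g c ht Ht; have tw : t < size w by lia.
  rewrite (drop_nth 0) ?size_map // (drop_nth false) ?size_st //.
  rewrite (drop_oversize (s := map fst w)) ?size_map; last by lia.
  by rewrite /= (nth_map (0, true)) //; apply: nloops_last Ht; lia.
have t1w : t.+1 < size w by lia.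
rewrite (drop_nth 0) ?size_map // (drop_nth false) ?size_st //.
rewrite run_loops_cons; last by rewrite (drop_nth 0) ?size_map.
rewrite (nth_map (0, true)) // addnA; apply: IH (tracks_step t1w Ht); lia.
Qed.

Lemma nloops_run : 0 < size w -> nloops 3 w st = run_loops (fun x => x %% 3) (map fst w) st.
Proof.
move=> w0; have -> : nloops 3 w st = nclasses (glued (size w)) (iota 0 (size w * 3)).
  by rewrite /nloops /nclasses /glued /edges_at /state_edges; case: (size w) w0.
rewrite -[map fst w]drop0 -[st]drop0 -[run_loops _ _ _]add0n.
apply: (@nloops_tracked (size w).-1); first by lia.
by split=> //; apply: (all_in2_eq (P := fun x y => x %% 3 == y %% 3)).
Qed.
End ClosedBraidLoops.

(** * The state sum *)

Lemma big_tuple_cons (V : nmodType) (T : finType) n (F : seq T -> V) :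
  (\sum_(t : n.+1.-tuple T) F t = \sum_(x : T) \sum_(t : n.-tuple T) F (x :: t))%R.
Proof.
rewrite pair_big /= (reindex (fun p : T * n.-tuple T => [tuple of p.1 :: p.2])) /=.
  by apply: eq_bigr => -[x t].
exists (fun t : n.+1.-tuple T => (thead t, [tuple of behead t])).
  by move=> [x t] _; rewrite theadE; congr pair; apply: val_inj.
by move=> t _; rewrite [in RHS](tuple_eta t).
Qed.

Lemma big_tuple0 (V : nmodType) (T : finType) (F : seq T -> V) :
  (\sum_(t : 0.-tuple T) F t)%R = F [::].
Proof. by rewrite (big_pred1 [tuple]) // => t; apply/esym/eqP; apply: tuple0. Qed.

Definition label_of (l : seq nat) x := nth 0 l x.

Definition canon (g : nat -> nat) : seq nat :=
  [seq find (fun y => g y == g x) (iota 0 6) | x <- iota 0 6].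

Lemma canonP g : {in iota 0 6 &, forall x y,
  (g x == g y) = (label_of (canon g) x == label_of (canon g) y)}.
Proof.
have canon_x x : x \in iota 0 6 ->
    label_of (canon g) x < 6 /\ g (label_of (canon g) x) = g x.
  move=> hx; have x6 : x < 6 by move: hx; rewrite mem_iota.
  have hh : has (fun y => g y == g x) (iota 0 6) by apply/hasP; exists x.
  have f6 : find (fun y => g y == g x) (iota 0 6) < 6 by move: hh; rewrite has_find size_iota.
  rewrite /label_of /canon (nth_map 0) ?size_iota // nth_iota //; split => //.
  by have := nth_find 0 hh; rewrite nth_iota // add0n => /eqP.
move=> x y hx hy; apply/eqP/eqP => [E|E]; last by rewrite -(canon_x x hx).2 -(canon_x y hy).2 E.
have x6 : x < 6 by move: hx; rewrite mem_iota.
have y6 : y < 6 by move: hy; rewrite mem_iota.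
rewrite /label_of /canon !(nth_map 0) ?size_iota // !nth_iota // !add0n.
by apply: eq_find => z; rewrite E.
Qed.

Section StateSum.
Variables (R : fieldType) (a : R).
Local Open Scope ring_scope.
Hypothesis a_neq0 : a != 0.

Definition dloop : R := - a ^+ 2 - a ^- 2.
Definition aexp (bs : seq bool) : int := \sum_(b <- bs) (if b then 1 else -1).
Definition smoothing_weight (b : bool) : R := if b then a else a^-1.

Definition run_bracket n (g : nat -> nat) (ls : seq nat) : R :=
  \sum_(bs : n.-tuple bool) a ^ aexp bs * dloop ^+ (run_loops g ls bs).-1.

Lemma run_bracket_cons n g i ls : ls != [::] -> size ls = n ->
  run_bracket n.+1 g (i :: ls) = \sum_(b : bool)
    smoothing_weight b * dloop ^+ (step_loops g i b) * run_bracket n (step_label g i b) ls.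
Proof.
move=> ls0 hn; pose F s := a ^ aexp s * dloop ^+ (run_loops g (i :: ls) s).-1.
rewrite /run_bracket -/F (big_tuple_cons n F); apply: eq_bigr => b _.
rewrite mulr_sumr; apply: eq_bigr => t _; rewrite /F run_loops_cons //.
have hp : (0 < run_loops (step_label g i b) ls t)%N by apply: run_loops_gt0; rewrite ?size_tuple.
rewrite -(prednK hp) addnS /= exprD /aexp big_cons expfzDr // {hp}.
by case: b; rewrite /smoothing_weight ?expr1z ?exprN1 -!mulrA; congr (_ * _); exact: mulrCA.
Qed.

Lemma eq_run_bracket n g g' ls : all (fun i => (i < 2)%N) ls ->
  {in iota 0 6 &, forall x y, (g x == g y) = (g' x == g' y)} ->
  run_bracket n g ls = run_bracket n g' ls.
Proof. by move=> hl H; apply: eq_bigr => t _; rewrite (eq_run_loops t hl H). Qed.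

(* Normalized bracket of the closure of the tangle encoded by [l] followed by
   the positive braid word [ls] of length [n]. *)
Definition state_bracket n (l : seq nat) ls := run_bracket n (label_of l) ls.

(* Locked, so that rewriting with the table lemmas below inside ring
   expressions never triggers this computation. *)
Fact smooth_key : unit. Proof. exact: tt. Qed.
Definition smooth := locked_with smooth_key (fun l i b =>
  (step_loops (label_of l) i b, canon (step_label (label_of l) i b))).
Canonical smooth_unlock := [unlockable of smooth].

Fact close_key : unit. Proof. exact: tt. Qed.
Definition close := locked_with close_key (fun l i b => close_loops (label_of l) i b).
Canonical close_unlock := [unlockable of close].

Lemma state_bracket_cons n l i ls : all (fun i => (i < 2)%N) ls -> ls != [::] -> size ls = n ->
  state_bracket n.+1 l (i :: ls) =
    a * dloop ^+ (smooth l i true).1 * state_bracket n (smooth l i true).2 ls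
  + a^-1 * dloop ^+ (smooth l i false).1 * state_bracket n (smooth l i false).2 ls.
Proof.
move=> hl ls0 hn; rewrite /state_bracket run_bracket_cons // big_bool unlock /=.
by rewrite !(eq_run_bracket _ hl (canonP (step_label _ i _))).
Qed.

Lemma state_bracket1 l i : state_bracket 1 l [:: i] =
  a * dloop ^+ (close l i true).-1 + a^-1 * dloop ^+ (close l i false).-1.
Proof.
pose F s := a ^ aexp s * dloop ^+ (run_loops (label_of l) [:: i] s).-1.
rewrite /state_bracket /run_bracket -/F (big_tuple_cons 0 F).
under eq_bigr => b _ do rewrite (big_tuple0 (fun s => F (b :: s))).
by rewrite big_bool unlock /F /aexp !big_cons !big_nil !addr0.
Qed.
End StateSum.

(** * Temperley-Lieb states and powers of Delta *)

(* The basis [1; e_1; e_2; e_1 e_2; e_2 e_1] of the Temperley-Lieb algebra TL_3,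
   as canonical labellings of the top points [0..2] and bottom points [3..5]. *)
Definition tl_basis : seq (seq nat) :=
  [:: [:: 0; 1; 2; 0; 1; 2]; [:: 0; 0; 2; 3; 3; 2]; [:: 0; 1; 1; 0; 4; 4];
      [:: 0; 0; 2; 2; 4; 4]; [:: 0; 1; 1; 3; 3; 0]].

Definition tl j := nth [::] tl_basis j.
Arguments tl : simpl never.

(* [tl j * e_(i+1) = dloop ^+ n * tl j'] where [(n, j') = tl_mul_e j i]. *)
Definition tl_mul_e (j i : nat) : nat * nat :=
  nth (0, 0) (nth [::] [:: [:: (0, 1); (0, 2)]; [:: (1, 1); (0, 3)]; [:: (0, 4); (1, 2)];
                          [:: (0, 1); (1, 3)]; [:: (1, 4); (0, 2)]] j) i.

(* Number of loops in the closure of [tl j]. *)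
Definition tl_closure (j : nat) : nat := nth 0 [:: 3; 2; 2; 1; 1] j.

Lemma smooth_tl j i b : j < 5 -> i < 2 ->
  smooth (tl j) i b = if b then ((tl_mul_e j i).1, tl (tl_mul_e j i).2) else (0, tl j).
Proof.
by move: j i => [|[|[|[|[|j]]]]] [|[|i]] // _ _; case: b; rewrite unlock; vm_compute.
Qed.

Lemma close_tl j b : j < 5 ->
  close (tl j) 0 b = if b then (tl_mul_e j 0).1 + tl_closure (tl_mul_e j 0).2 else tl_closure j.
Proof. by move: j => [|[|[|[|[|j]]]]] // _; case: b; rewrite unlock; vm_compute. Qed.

Definition delta_letters m : seq nat := flatten (nseq m [:: 0; 1; 0]).
Arguments delta_letters : simpl never.

Lemma size_delta_letters m : size (delta_letters m) = 3 * m.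
Proof. by elim: m => //= m IH; rewrite IH; lia. Qed.

Lemma delta_letters_eq0 m : (delta_letters m == [::]) = (m == 0).
Proof. by case: m. Qed.

Lemma delta_letters_lt2 m : all (fun i => i < 2) (delta_letters m).
Proof. by elim: m. Qed.

Section TwistBracket.
Variables (R : fieldType) (a : R).
Local Open Scope ring_scope.
Hypothesis a_neq0 : a != 0.

Lemma state_bracket_cons_tl n j i ls : (j < 5)%N -> (i < 2)%N ->
  all (fun i => (i < 2)%N) ls -> ls != [::] -> size ls = n ->
  state_bracket a n.+1 (tl j) (i :: ls) =
    a * dloop a ^+ (tl_mul_e j i).1 * state_bracket a n (tl (tl_mul_e j i).2) ls
  + a^-1 * state_bracket a n (tl j) ls.
Proof. by move=> j5 i2 *; rewrite state_bracket_cons // !smooth_tl //= expr0 mulr1. Qed.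

Lemma state_bracket1_tl j : (j < 5)%N -> state_bracket a 1 (tl j) [:: 0%N] =
  a * dloop a ^+ ((tl_mul_e j 0).1 + tl_closure (tl_mul_e j 0).2).-1
  + a^-1 * dloop a ^+ (tl_closure j).-1.
Proof. by move=> j5; rewrite state_bracket1 !close_tl. Qed.

Definition twist_bracket m j := state_bracket a (3 * m) (tl j) (delta_letters m).

Lemma twist_bracketS m j : (0 < m)%N ->
  twist_bracket m.+1 j = state_bracket a (3 * m).+3 (tl j) [:: 0, 1, 0 & delta_letters m]%N.
Proof. by move=> m0; rewrite /twist_bracket (_ : (3 * m.+1 = (3 * m).+3)%N) //; lia. Qed.

(* In TL_3, x_i acts as a e_i + a^-1, so that
   Delta = a^-3 + a^-1 (e_1 + e_2) + a (e_1 e_2 + e_2 e_1),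
   e_1 Delta = -a^3 e_1 e_2 and e_1 e_2 Delta = -a^3 e_1 (and symmetrically). *)
Lemma twist_bracketS_1 m : (0 < m)%N -> twist_bracket m.+1 0 =
  a ^- 3 * twist_bracket m 0 + a^-1 * (twist_bracket m 1 + twist_bracket m 2)
  + a * (twist_bracket m 3 + twist_bracket m 4).
Proof.
move=> m0; rewrite twist_bracketS // !state_bracket_cons_tl //=;
  rewrite ?delta_letters_lt2 ?size_delta_letters ?delta_letters_eq0 -?lt0n //.
by rewrite -!/(twist_bracket _ _) /dloop; field.
Qed.

Lemma twist_bracketS_e m : (0 < m)%N -> [/\
  twist_bracket m.+1 1 = - a ^+ 3 * twist_bracket m 3,
  twist_bracket m.+1 2 = - a ^+ 3 * twist_bracket m 4,
  twist_bracket m.+1 3 = - a ^+ 3 * twist_bracket m 1 &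
  twist_bracket m.+1 4 = - a ^+ 3 * twist_bracket m 2].
Proof.
by move=> m0; split; rewrite twist_bracketS // !state_bracket_cons_tl //=;
  rewrite ?delta_letters_lt2 ?size_delta_letters ?delta_letters_eq0 -?lt0n //;
  rewrite -!/(twist_bracket _ _) /dloop; field.
Qed.

Lemma twist_bracket1 : [/\ twist_bracket 1 0 = a + a ^- 7, twist_bracket 1 1 = - a ^+ 3,
  twist_bracket 1 2 = - a ^+ 3, twist_bracket 1 3 = a + a ^+ 5 &
  twist_bracket 1 4 = a + a ^+ 5].
Proof.
by split; rewrite /twist_bracket /delta_letters /= (@state_bracket_cons_tl 2) //=
  !(@state_bracket_cons_tl 1) //= !state_bracket1_tl //=;
  rewrite /dloop; field.
Qed.
End TwistBracket.

Section ClosedForms.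
Variables (R : fieldType) (a : R).
Local Open Scope ring_scope.
Hypothesis a_neq0 : a != 0.
Notation tb := (twist_bracket a).

Definition odd_twist_form m (X : R) := [/\ tb m 0 = (a + a ^- 7) / X,
  tb m 1 = - a ^+ 3 * X, tb m 2 = - a ^+ 3 * X, tb m 3 = (a + a ^+ 5) * X &
  tb m 4 = (a + a ^+ 5) * X].

Definition even_twist_form m (X : R) := [/\ tb m 0 = 2%:R * a ^+ 6 * X + (a ^- 2 + a ^- 10) / X,
  tb m 1 = - (a ^+ 4 + a ^+ 8) * X, tb m 2 = - (a ^+ 4 + a ^+ 8) * X,
  tb m 3 = a ^+ 6 * X & tb m 4 = a ^+ 6 * X].

Lemma even_twist_formS m X : (0 < m)%N -> X != 0 ->
  odd_twist_form m X -> even_twist_form m.+1 X.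
Proof.
move=> m0 X0 [h0 h1 h2 h3 h4]; have [e1 e2 e3 e4] := twist_bracketS_e a_neq0 m0.
by split; rewrite ?(twist_bracketS_1 a_neq0 m0) ?e1 ?e2 ?e3 ?e4 ?h0 ?h1 ?h2 ?h3 ?h4;
  field; rewrite ?X0 ?a_neq0.
Qed.

Lemma odd_twist_formS m X : (0 < m)%N -> X != 0 ->
  even_twist_form m X -> odd_twist_form m.+1 (X * a ^+ 6).
Proof.
move=> m0 X0 [h0 h1 h2 h3 h4]; have [e1 e2 e3 e4] := twist_bracketS_e a_neq0 m0.
by split; rewrite ?(twist_bracketS_1 a_neq0 m0) ?e1 ?e2 ?e3 ?e4 ?h0 ?h1 ?h2 ?h3 ?h4;
  field; rewrite ?X0 ?a_neq0.
Qed.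

Lemma twist_forms k :
  odd_twist_form (2 * k).+1 (a ^+ (6 * k)) /\ even_twist_form (2 * k).+2 (a ^+ (6 * k)).
Proof.
have X0 n : a ^+ (6 * n) != 0 by rewrite expf_neq0.
have odd_form : odd_twist_form 1 1.
  by have [h0 h1 h2 h3 h4] := twist_bracket1 a_neq0; split; rewrite ?mulr1 ?divr1.
elim: k => [|k [_ IH]]; first by rewrite muln0; split => //; apply: even_twist_formS.
have Ho : odd_twist_form (2 * k.+1).+1 (a ^+ (6 * k.+1)).
  by rewrite mulnS add2n mulnS exprD mulrC; apply: odd_twist_formS.
by split => //; apply: even_twist_formS.
Qed.
End ClosedForms.

(** * The Jones polynomial of Delta^m *)

Lemma map_fst_Delta3_pow m : map fst (Delta3_pow m) = delta_letters m.
Proof. by rewrite /delta_letters; elim: m => //= m ->. Qed.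

Lemma size_Delta3_pow m : size (Delta3_pow m) = 3 * m.
Proof. by rewrite -(size_map fst) map_fst_Delta3_pow size_delta_letters. Qed.

Lemma writhe_Delta3_pow m : writhe (Delta3_pow m) = (- (3 * m)%:Z)%R.
Proof.
elim: m => [|m IH]; first by rewrite /writhe big_nil.
move: IH; rewrite /writhe /Delta3_pow /= !big_cons /= => ->.
by rewrite (_ : 3 * m.+1 = (3 * m).+3); lia.
Qed.

Lemma state_Aexp_positive (w : braid_word) (st : (size w).-tuple bool) :
  all (fun l => l.2) w -> state_Aexp w st = aexp st.
Proof.
move=> w_pos; rewrite /state_Aexp /aexp (big_nth false) size_tuple big_mkord.
by apply: eq_bigr => j _; rewrite ((allP w_pos) _ (mem_nth _ (ltn_ord j))) eqb_id.
Qed.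

Section JonesDelta3.
Variables (R : fieldType) (a : R).
Local Open Scope ring_scope.
Hypothesis a_neq0 : a != 0.

Lemma kbracket_Delta3_pow m : (0 < m)%N -> kbracket 3 (Delta3_pow m) a = twist_bracket a m 0.
Proof.
move=> m0; rewrite /kbracket.
have w_lt2 : all (fun l : nat * bool => (l.1 < 2)%N) (Delta3_pow m) by elim: m {m0}.
have w_pos : all (fun l : nat * bool => l.2) (Delta3_pow m) by elim: m {m0 w_lt2}.
transitivity (run_bracket a (size (Delta3_pow m)) (fun x => x %% 3)%N (map fst (Delta3_pow m))).
  apply: eq_bigr => st _; rewrite state_Aexp_positive // nloops_run ?size_tuple //.
  by rewrite size_Delta3_pow; lia.
rewrite map_fst_Delta3_pow /twist_bracket /state_bracket size_Delta3_pow.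
apply: eq_run_bracket; first exact: delta_letters_lt2.
by apply: (all_in2_eq (P := fun x y => (x %% 3 == y %% 3)%N)).
Qed.

Lemma jones_Delta3_pow m : (0 < m)%N ->
  jones 3 (Delta3_pow m) a = (- a ^+ 3) ^+ (3 * m) * twist_bracket a m 0.
Proof. by move=> m0; rewrite /jones writhe_Delta3_pow opprK kbracket_Delta3_pow. Qed.

Lemma expr_split (x : R) n c d e : e = (n * c + d)%N -> x ^+ e = (x ^+ n) ^+ c * x ^+ d.
Proof. by move=> ->; rewrite exprD exprM. Qed.

Lemma jones_Delta3_pow_odd k : jones 3 (Delta3_pow (2 * k + 1)) a =
  - (a ^+ 2) ^+ (6 * k + 5) - (a ^+ 2) ^+ (6 * k + 1).
Proof.
rewrite addn1 jones_Delta3_pow //; have [[-> _ _ _ _] _] := twist_forms a_neq0 k.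
rewrite (_ : (3 * (2 * k).+1 = (2 * (3 * k + 1)).+1)%N); last by lia.
rewrite exprS exprM sqrrN -!exprM.
rewrite (@expr_split _ (6 * k) 3 6 (3 * (2 * (3 * k + 1)))); last by lia.
rewrite (@expr_split _ (6 * k) 2 10 (2 * (6 * k + 5))); last by lia.
rewrite (@expr_split _ (6 * k) 2 2 (2 * (6 * k + 1))); last by lia.
have : a ^+ (6 * k) != 0 by rewrite expf_neq0.
by move: (a ^+ (6 * k)) => X X0; field; rewrite ?X0 ?a_neq0.
Qed.

Lemma jones_Delta3_pow_even k : jones 3 (Delta3_pow (2 * k)) a =
  2%:R * (a ^+ 2) ^+ (12 * k) + (a ^+ 2) ^+ (6 * k + 2) + (a ^+ 2) ^+ (6 * k) / (a ^+ 2) ^+ 2.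
Proof.
case: k => [|k].
  rewrite /jones /kbracket (big_tuple0 (fun st => a ^ state_Aexp (Delta3_pow 0) st *
    (- a ^+ 2 - a ^- 2) ^+ (nloops 3 (Delta3_pow 0) st).-1)).
  rewrite (_ : nloops 3 (Delta3_pow 0) [::] = 3%N); last by vm_compute.
  rewrite /state_Aexp /writhe big_ord0 big_nil /= !expr0z !mul1r !muln0 !expr0.
  by field.
rewrite (_ : (2 * k.+1 = (2 * k).+2)%N) ?jones_Delta3_pow //; last by lia.
have [_ [-> _ _ _ _]] := twist_forms a_neq0 k.
rewrite (_ : (3 * (2 * k).+2 = 2 * (3 * k.+1))%N); last by lia.
rewrite exprM sqrrN -!exprM.
rewrite (@expr_split _ (6 * k) 3 18 (3 * (2 * (3 * k.+1)))); last by lia.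
rewrite (@expr_split _ (6 * k) 4 24 (2 * (12 * k.+1))); last by lia.
rewrite (@expr_split _ (6 * k) 2 16 (2 * (6 * k.+1 + 2))); last by lia.
rewrite (@expr_split _ (6 * k) 2 12 (2 * (6 * k.+1))); last by lia.
have : a ^+ (6 * k) != 0 by rewrite expf_neq0.
by move: (a ^+ (6 * k)) => X X0; field; rewrite ?X0 ?a_neq0.
Qed.
End JonesDelta3.

Local Open Scope ring_scope.

Theorem proposition1p5 (R : fieldType) (a : R) (k : nat) :
  a != 0 ->
  let s := a ^+ 2 in
  jones 3 (Delta3_pow (2 * k)) a
    = 2%:R * s ^+ (12 * k) + s ^+ (6 * k + 2) + s ^ ((6 * k)%:Z - 2%:Z)
  /\ jones 3 (Delta3_pow (2 * k + 1)) a
    = - s ^+ (6 * k + 5) - s ^+ (6 * k + 1).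
Proof.
move=> a_neq0 s; split; last exact: jones_Delta3_pow_odd.
by rewrite jones_Delta3_pow_even // expfzDr ?expf_neq0 // -exprnP -exprnN.
Qed.
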